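(* Let $\mathbb I$ be an index coding problem which admits a valid scalar linear index code of length $3$ over a finite field $\mathbb F$. Then for every type-2 alignment set of $\mathbb I$ with message set ${\cal W}'$, the restricted problem ${\mathbb I}_{{\cal W}'}$ admits a valid scalar linear index code of length $2$ over $\mathbb F$, and there are no ${\cal W}'$-restricted internal conflicts.
   Context: Index coding setup: An index coding problem $\mathbb I$ over a finite field $\mathbb F$ consists of a set of messages ${\cal W}=\{W_1,\dots,W_n\}$ (each message is a symbol of $\mathbb F$ in the scalar setting), a set of receivers $[1:T]$, and for each receiver $j$ a demand set $D(j)\subseteq{\cal W}$ and a side-information set $S(j)\subseteq {\cal W}\setminus D(j)$. Every message is demanded by at least one receiver. For a receiver $j$ and $W_k\in D(j)$, the interfering set is $Interf_k(j)={\cal W}\setminus(\{W_k\}\cup S(j))$; if $W_k\notin D(j)$ then $Interf_k(j)=\emptyset$. A scalar linear index code of length $L$ over $\mathbb F$ is an assignment of vectors $V_1,\dots,V_n\in\mathbb F^L$ to the messages; the source broadcasts $\sum_{i=1}^n V_iW_i\in\mathbb F^L$, and the code is valid if every receiver $j$ can recover every message of $D(j)$ from the broadcast codeword and the messages in $S(j)$. Two distinct messages $W_i,W_k$ are in conflict if there is a receiver $j$ with $W_k\in D(j)$ and $W_i\in Interf_k(j)$, or a receiver $j$ with $W_i\in D(j)$ and $W_k\in Interf_i(j)$. Alignment graph: the graph with vertex set ${\cal W}$ in which distinct $W_a,W_b$ are adjacent if there exist a receiver $j$ and a message $W_k\in D(j)$ with $W_k\notin\{W_a,W_b\}$ and $W_a,W_b\notin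 S(j)$. An alignment set is the vertex set of a connected component of the alignment graph. An internal conflict is a conflict between two messages lying in the same alignment set. A triangular interfering set is a subset ${\cal W}''\subseteq{\cal W}$ with $|{\cal W}''|=3$ such that there exist a receiver $j$ and a message $W_k\in D(j)\setminus{\cal W}''$ with ${\cal W}''\subseteq Interf_k(j)$, and at least two messages of ${\cal W}''$ are in conflict. Two distinct triangular interfering sets ${\cal W}_1,{\cal W}_2$ are adjacent if ${\cal W}_1\cap{\cal W}_2=\{W_a,W_b\}$ with $W_a,W_b$ in conflict. Two triangular interfering sets are connected if there is a finite sequence of triangular interfering sets starting at one and ending at the other in which consecutive sets are adjacent (every set is connected to itself). A type-2 alignment set is a maximal collection of pairwise connected triangular interfering sets (an equivalence class under connectedness); its message set is the union of its triangular interfering sets. Restricted problem: for ${\cal W}'\subseteq{\cal W}$, the ${\cal W}'$-restricted index coding problem ${\mathbb I}_{{\cal W}'}$ has message set ${\cal W}'$, receivers the receivers $j$ of $\mathbb I$ with $D(j)\cap{\cal W}'\neq\emptyset$, and for each such $j$ demand set $D(j)\cap{\cal W}'$ and side-information set $S(j)\cap{\cal W}'$. The ${\cal W}'$-restricted alignment sets and internal conflicts are the alignment sets and internal conflicts of ${\mathbb I}_{{\cal W}'}$ (conflicts being computed in ${\mathbb I}_{{\cal W}'}$). *)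

From HB Require Import structures.
From mathcomp Require Import all_boot all_order all_algebra all_field.
Set Implicit Arguments. Unset Strict Implicit. Unset Printing Implicit Defensive.
Import GRing.Theory.
Local Open Scope ring_scope.

(* An index coding problem with messages 'I_n and receivers 'I_T is given by
   demand sets D and side-information sets S.  All notions below are defined
   for the problem restricted to a message set W : {set 'I_n}; the original
   problem is the case W = setT.  (Receivers j with D j :&: W = set0 play no
   role in any of the definitions, so restricting the receiver set is implicit.) *)

Section IndexCoding.
Variables (n T : nat) (D S : 'I_T -> {set 'I_n}) (W : {set 'I_n}).

Definition interf (j : 'I_T) (k : 'I_n) : {set 'I_n} :=
  if k \in D j :&: W then W :\: (k |: (S j :&: W)) else set0.

(* scalar linear code of length L: vectors V i, codeword \sum_(i in W) w_i V_i;
   valid iff each receiver j can recover each demanded W_k, i.e. the value of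
   W_k is determined by the codeword together with the side information. *)
Definition valid_code (F : fieldType) (L : nat) (V : 'I_n -> 'rV[F]_L) : Prop :=
  forall (j : 'I_T) (k : 'I_n), k \in D j :&: W ->
  forall w w' : 'I_n -> F,
    (forall i, i \in S j :&: W -> w i = w' i) ->
    \sum_(i in W) w i *: V i = \sum_(i in W) w' i *: V i ->
    w k = w' k.

Definition conflict (a b : 'I_n) : bool :=
  (a != b) &&
  [exists j : 'I_T,
     ((b \in D j :&: W) && (a \in interf j b)) ||
     ((a \in D j :&: W) && (b \in interf j a))].

Definition align_adj : rel 'I_n := fun a b =>
  [&& a \in W, b \in W, a != b &
   [exists j : 'I_T, exists k : 'I_n,
      [&& k \in D j :&: W, k != a, k != b, a \notin S j & b \notin S j]]].

Definition same_align_set (a b : 'I_n) : bool :=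
  [&& a \in W, b \in W & connect align_adj a b].

Definition has_internal_conflict : Prop :=
  exists a b, conflict a b /\ same_align_set a b.

(* type-2 notions (used for the original problem, W = setT) *)
Definition triangular (X : {set 'I_n}) : bool :=
  [&& #|X| == 3,
   [exists j : 'I_T, exists k : 'I_n,
      [&& k \in D j :&: W, k \notin X & X \subset interf j k]] &
   [exists a in X, exists b in X, conflict a b]].

Definition tri_adj : rel {set 'I_n} := fun X Y =>
  [&& triangular X, triangular Y, X != Y &
   [exists a, exists b, (X :&: Y == [set a; b]) && conflict a b]].

Definition type2_msgs (X0 : {set 'I_n}) : {set 'I_n} :=
  \bigcup_(X | triangular X && connect tri_adj X0 X) X.

End IndexCoding.

From HB Require Import structures.
From mathcomp Require Import all_boot all_order all_algebra all_field.
(* A valid code keeps every demanded vector [V k] outside the span of the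
   vectors interfering with it.  In length 3 this forces every interfering set
   containing a conflicting pair {a, b} to span exactly the plane <V a, V b>.
   Adjacent triangular sets share such a pair, so all triangular sets of a
   type-2 alignment set span one plane, and writing the vectors of its messages
   in a basis of that plane gives a valid code of length 2.  In length 2, two
   messages interfering with a common demand are parallel, so an alignment set
   spans a line, whereas two conflicting messages span a plane. *)

Set Implicit Arguments. Unset Strict Implicit. Unset Printing Implicit Defensive.
Import GRing.Theory.
Local Open Scope ring_scope.

Definition code_span (F : fieldType) n L (V : 'I_n -> 'rV[F]_L)
    (X : {set 'I_n}) : 'M[F]_L :=
  (\sum_(i in X) <<V i>>)%MS.

Lemma code_vec_sub_span (F : fieldType) n L (V : 'I_n -> 'rV[F]_L)
    (X : {set 'I_n}) i :
  i \in X -> (V i <= code_span V X)%MS.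
Proof. by move=> iX; rewrite (sumsmx_sup i) ?genmxE. Qed.

Lemma connect_eqmx (F : fieldType) (I : finType) (e : rel I) m p
    (f : I -> 'M[F]_(m, p)) :
  (forall x y, e x y -> (f x == f y)%MS) ->
  forall x y, connect e x y -> (f y == f x)%MS.
Proof.
move=> e_eqmx x; pose same_space := [pred z | (f z == f x)%MS].
have closed_same : closed e same_space.
  move=> y z /e_eqmx/andP[syz szy]; rewrite !inE.
  apply/andP/andP=> [[syx sxy] | [szx sxz]].
    by rewrite (submx_trans szy syx) (submx_trans sxy syz).
  by rewrite (submx_trans syz szx) (submx_trans sxz szy).
move=> y /(closed_connect closed_same); rewrite !inE => <-.
by rewrite submx_refl.
Qed.

Section IndexCode.
Variables (F : fieldType) (n T : nat) (D S : 'I_T -> {set 'I_n}).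

Lemma mem_interf (W : {set 'I_n}) j k i :
  (i \in interf D S W j k) = [&& k \in D j :&: W, i \in W, i != k & i \notin S j].
Proof.
rewrite /interf; case: (k \in D j :&: W); rewrite ?inE //=.
by case: (i \in W); rewrite ?andbF ?andbT //= negb_or.
Qed.

Lemma interf_demanded (W : {set 'I_n}) j k i :
  i \in interf D S W j k -> k \in D j :&: W.
Proof. by rewrite mem_interf => /andP[]. Qed.

Lemma interf_sub (W : {set 'I_n}) j k : interf D S W j k \subset W.
Proof. by apply/subsetP => i; rewrite mem_interf => /and3P[]. Qed.

Lemma valid_code_subset (W1 W2 : {set 'I_n}) L (V : 'I_n -> 'rV[F]_L) :
  W1 \subset W2 -> valid_code D S W2 V -> valid_code D S W1 V.
Proof.
move=> sW12 hV j k; rewrite inE => /andP[kD kW1] w w' ww' sum_ww'.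
pose ext (z : 'I_n -> F) i := if i \in W1 then z i else 0.
have ext_sum z : \sum_(i in W2) ext z i *: V i = \sum_(i in W1) z i *: V i.
  rewrite (big_setID W1) /= (setIidPr sW12) [X in _ + X]big1 ?addr0.
    by apply: eq_bigr => i iW1; rewrite /ext iW1.
  by move=> i; rewrite !inE => /andP[/negbTE iW1 _]; rewrite /ext iW1 scale0r.
have := hV j k _ (ext w) (ext w'); rewrite /ext kW1; apply.
- by rewrite inE kD (subsetP sW12).
- by move=> i; rewrite inE => /andP[iS _]; case: ifP => // iW1; apply: ww'; rewrite inE iS.
- by rewrite !ext_sum.
Qed.

Lemma valid_code_mulmx (W : {set 'I_n}) L m (V : 'I_n -> 'rV[F]_L)
    (U : 'I_n -> 'rV[F]_m) (B : 'M_(m, L)) :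
  (forall i, i \in W -> V i = U i *m B) -> valid_code D S W V -> valid_code D S W U.
Proof.
move=> VUB hV j k hk w w' ww' sum_ww'; apply: (hV j k hk w w' ww').
have sum_mulmx z : \sum_(i in W) z i *: V i = (\sum_(i in W) z i *: U i) *m B.
  by rewrite mulmx_suml; apply: eq_bigr => i iW; rewrite VUB // scalemxAl.
by rewrite !sum_mulmx sum_ww'.
Qed.

Section ValidCode.
Variables (W : {set 'I_n}) (L : nat) (V : 'I_n -> 'rV[F]_L).
Hypotheses (hSD : forall j, [disjoint S j & D j])
  (hdem : forall i : 'I_n, exists j, i \in D j) (hV : valid_code D S W V).

(* Otherwise [W_k = 1] minus the coefficients of [V k] on [X] is a message
   vector with codeword [0] that vanishes on [S j] but not at [k]. *)
Lemma demand_notin_interf_span j k (X : {set 'I_n}) :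
  k \in D j :&: W -> X \subset interf D S W j k -> ~~ (V k <= code_span V X)%MS.
Proof.
move=> hk sXI; apply/negP => /sub_sums_genmxP[u Vk_span].
have [kD kW] : k \in D j /\ k \in W by move: hk; rewrite inE => /andP.
have mem_X i : i \in X -> [&& i \in W, i != k & i \notin S j].
  by move=> /(subsetP sXI); rewrite mem_interf => /andP[_].
pose c i := if i \in X then u i 0 0 else 0.
have kX : k \notin X by apply/negP => /mem_X; rewrite eqxx andbF.
have Vk_sum : V k = \sum_(i in W) c i *: V i.
  rewrite Vk_span [RHS](big_setID X) /= [X in _ + X]big1 ?addr0.
    rewrite (setIidPr _); last by apply/subsetP => i /mem_X /andP[].
    by apply: eq_bigr => i iX; rewrite /c iX {1}(mx11_scalar (u i)) mul_scalar_mx.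
  by move=> i; rewrite !inE => /andP[/negbTE iX _]; rewrite /c iX scale0r.
have ck : c k = 0 by rewrite /c (negbTE kX).
have := @hV j k hk (fun i => (i == k)%:R - c i) (fun _ => 0).
rewrite eqxx ck subr0 => one_eq0.
suff: (1 : F) = 0 by move/eqP; rewrite oner_eq0.
apply: one_eq0.
- move=> i; rewrite inE => /andP[iS iW].
  have ik : (i == k) = false.
    by apply/negbTE; apply: contraTneq iS => ->; rewrite (disjointFl (hSD j) kD).
  have iX : (i \in X) = false by apply/negbTE/negP => /mem_X; rewrite iS !andbF.
  by rewrite ik /c iX subrr.
- rewrite [RHS]big1 => [|i _]; last by rewrite scale0r.
  under eq_bigr do rewrite scalerBl.
  rewrite sumrB -Vk_sum (bigD1 k) //= eqxx scale1r big1 ?addr0 ?subrr //.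
  by move=> i /andP[_ /negbTE->]; rewrite scale0r.
Qed.

Lemma rank_code_span_interf_lt j k (X : {set 'I_n}) :
  k \in D j :&: W -> X \subset interf D S W j k -> (\rank (code_span V X) < L)%N.
Proof.
move=> hk sXI; rewrite ltn_neqAle rank_leq_col andbT.
by apply: contra (demand_notin_interf_span hk sXI) => /submx_full.
Qed.

Lemma code_vec_neq0 i : i \in W -> V i != 0.
Proof.
move=> iW; have [j iD] := hdem i.
have iDW : i \in D j :&: W by rewrite inE iD.
have := demand_notin_interf_span iDW (sub0set _).
by rewrite /code_span big_set0 submx0.
Qed.

Lemma rank_code_vec i : i \in W -> \rank (V i) = 1%N.
Proof. by move=> iW; rewrite rank_rV code_vec_neq0. Qed.

Lemma rank_adds_code_vec_gt1 a b :
  a \in W -> ~~ (V b <= V a)%MS -> (1 < \rank (V a + V b))%N.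
Proof.
move=> aW Vba; rewrite -[X in (X < _)%N](rank_code_vec aW); apply: rank_ltmx.
by rewrite ltmxE addsmxSl addsmx_sub submx_refl.
Qed.

Lemma interf_notsub j a b : a \in interf D S W j b -> ~~ (V b <= V a)%MS.
Proof.
move=> aI; have := @demand_notin_interf_span j b [set a] (interf_demanded aI).
by rewrite sub1set aI /code_span big_set1 genmxE; apply.
Qed.

Lemma conflict_rank_adds a b : conflict D S W a b -> (1 < \rank (V a + V b))%N.
Proof.
case/andP=> _ /existsP[j /orP[/andP[_ aI] | /andP[_ bI]]].
  exact: rank_adds_code_vec_gt1 (subsetP (interf_sub _ _ _) _ aI) (interf_notsub aI).
rewrite addsmxC.
exact: rank_adds_code_vec_gt1 (subsetP (interf_sub _ _ _) _ bI) (interf_notsub bI).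
Qed.

End ValidCode.

Section LengthThree.
Variables (W : {set 'I_n}) (V : 'I_n -> 'rV[F]_3).
Hypotheses (hSD : forall j, [disjoint S j & D j])
  (hdem : forall i : 'I_n, exists j, i \in D j) (hV : valid_code D S W V).

(* The span of an interfering set has rank at most 2, and a conflicting pair
   already has rank 2. *)
Lemma code_span_interf_conflict j k (X : {set 'I_n}) a b :
  k \in D j :&: W -> X \subset interf D S W j k -> conflict D S W a b ->
  a \in X -> b \in X -> (code_span V X == V a + V b)%MS.
Proof.
move=> hk sXI ab aX bX; apply/andP; split; last first.
  by rewrite addsmx_sub !code_vec_sub_span.
apply/sumsmx_subP => c cX; rewrite genmxE; apply/contraT => Vc.
have rank_ab := conflict_rank_adds hSD hdem hV ab.
have rank_abc : (\rank (V a + V b) < \rank (V a + V b + V c))%N.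
  by apply: rank_ltmx; rewrite ltmxE addsmxSl addsmx_sub submx_refl.
have sub_abc : (V a + V b + V c <= code_span V X)%MS.
  by rewrite !addsmx_sub !code_vec_sub_span.
have := rank_code_span_interf_lt hSD hV hk sXI.
by rewrite ltnNge (leq_trans (leq_ltn_trans rank_ab rank_abc) (mxrankS sub_abc)).
Qed.

Lemma triangular_code_span X a b :
  triangular D S W X -> conflict D S W a b -> a \in X -> b \in X ->
  (code_span V X == V a + V b)%MS.
Proof.
case/and3P=> _ /existsP[j /existsP[k /and3P[hk _ sXI]]] _.
by move=> ab aX bX; apply: code_span_interf_conflict hk sXI ab aX bX.
Qed.

Lemma tri_adj_code_span X Y :
  tri_adj D S W X Y -> (code_span V X == code_span V Y)%MS.
Proof.
case/and4P=> tX tY _ /existsP[a /existsP[b /andP[/eqP XY ab]]].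
have /setIP[aX aY] : a \in X :&: Y by rewrite XY !inE eqxx.
have /setIP[bX bY] : b \in X :&: Y by rewrite XY !inE eqxx orbT.
have /andP[sXab sabX] := triangular_code_span tX ab aX bX.
have /andP[sYab sabY] := triangular_code_span tY ab aY bY.
by rewrite (submx_trans sXab sabY) (submx_trans sYab sabX).
Qed.

Lemma type2_msgs_sub_code_span X0 i :
  i \in type2_msgs D S W X0 -> (V i <= code_span V X0)%MS.
Proof.
case/bigcupP=> Y /andP[_ /(connect_eqmx tri_adj_code_span)/andP[sYX0 _]] iY.
exact: submx_trans (code_vec_sub_span V iY) sYX0.
Qed.

End LengthThree.

Section LengthTwo.
Variables (W : {set 'I_n}) (U : 'I_n -> 'rV[F]_2).
Hypotheses (hSD : forall j, [disjoint S j & D j])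
  (hdem : forall i : 'I_n, exists j, i \in D j) (hU : valid_code D S W U).

(* Two messages interfering with the same demand span a line in [F^2]. *)
Lemma align_adj_eqmx x y : align_adj D S W x y -> (U x == U y)%MS.
Proof.
case/and4P=> xW yW _ /existsP[j /existsP[k /and5P[hk kx ky xS yS]]].
have sXI : [set x; y] \subset interf D S W j k.
  apply/subsetP => i; rewrite !inE mem_interf hk.
  by case/orP=> /eqP->; rewrite eq_sym ?xW ?kx ?xS ?yW ?ky ?yS.
have rank_xy : (\rank (U x + U y) <= 1)%N.
  rewrite -ltnS (leq_ltn_trans _ (rank_code_span_interf_lt hSD hU hk sXI)) //.
  by rewrite mxrankS // addsmx_sub !code_vec_sub_span // !inE eqxx ?orbT.
apply/andP; split; apply/contraT => /(rank_adds_code_vec_gt1 hSD hdem hU).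
  by rewrite addsmxC leqNgt in rank_xy => /(_ yW); rewrite (negbTE rank_xy).
by rewrite leqNgt in rank_xy => /(_ xW); rewrite (negbTE rank_xy).
Qed.

Lemma no_internal_conflict_length2 : ~ has_internal_conflict D S W.
Proof.
case=> a [b [ab /and3P[aW _ /(connect_eqmx align_adj_eqmx)/andP[sba _]]]].
have := conflict_rank_adds hSD hdem hU ab.
by rewrite (addsmx_idPl sba) (rank_code_vec hSD hdem hU aW).
Qed.

End LengthTwo.
End IndexCode.

Theorem theorem6 (F : finFieldType) (n T : nat) (D S : 'I_T -> {set 'I_n})
  (hSD : forall j, [disjoint S j & D j])
  (hdem : forall i : 'I_n, exists j, i \in D j)
  (hcode : exists V : 'I_n -> 'rV[F]_3, valid_code D S setT V) :
  forall X0 : {set 'I_n}, triangular D S setT X0 ->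
    let W' := type2_msgs D S setT X0 in
    (exists V : 'I_n -> 'rV[F]_2, valid_code D S W' V) /\
    ~ has_internal_conflict D S W'.
Proof.
move=> X0 tX0 W'; have [V hV] := hcode.
have [a0 [b0 [a0X b0X ab0]]] :
    exists a0 b0, [/\ a0 \in X0, b0 \in X0 & conflict D S setT a0 b0].
  by case/and3P: tX0 => _ _ /existsP[a /andP[aX /existsP[b /andP[bX ab]]]]; exists a, b.
pose B := col_mx (V a0) (V b0).
have VB i : i \in W' -> (V i <= B)%MS.
  move/(type2_msgs_sub_code_span hSD hdem hV) => sVX0.
  have /andP[sX0ab _] := triangular_code_span hSD hdem hV tX0 ab0 a0X b0X.
  by rewrite -addsmxE (submx_trans sVX0 sX0ab).
pose U i : 'rV[F]_2 := V i *m pinvmx B.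
have hU : valid_code D S W' U.
  apply: (valid_code_mulmx (B := B)) (valid_code_subset (subsetT W') hV) => i iW'.
  by rewrite mulmxKpV ?VB.
split; first by exists U.
exact: no_internal_conflict_length2 hSD hdem hU.
Qed.
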